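(* Let $\Bbbk$ be an algebraically closed field of characteristic zero, $G$ a finite group, $\chi:G\to\Bbbk^\times$ a linear character with $\chi^n=1$, $g\in Z(G)$ with $g^n\neq 1$, where $n\geq 2$ is the multiplicative order of $\chi(g)$. Let $H$ be the $\Bbbk$-algebra generated by $\Bbbk G$ and $z$ with relations $z^n=g^n-1$ and $zs=\chi(s)sz$ for $s\in G$. Then for every $j\in\Lambda_1$, the annihilator ideal in $H$ of the $H$-module $P_j$ is $$\Big(\sum_{i\in\Lambda_0}e_i+\sum_{j'\in\Lambda_1\setminus\mathbf{Orb}(j)}e_{j'}\Big).$$
   Context: Let $\chi_0,\dots,\chi_{p-1}$ be the irreducible characters of $G$, $V_i$ a simple $\Bbbk G$-module with character $\chi_i$, and $e_i=\frac{\chi_i(1)}{|G|}\sum_{h\in G}\chi_i(h)h^{-1}$. The central element $g^n$ acts on $V_i$ by a scalar $\lambda_i$; $\Lambda_0=\{i:\lambda_i=1\}$, $\Lambda_1=\{i:\lambda_i\neq 1\}$. The permutation $\tau$ of the indices is defined by $\chi^{-1}\chi_i=\chi_{\tau(i)}$, and $\mathbf{Orb}(j)=\{j,\tau(j),\dots,\tau^{n-1}(j)\}$. For $j\in\Lambda_1$, $P_j=V_j\oplus xV_j\oplus\cdots\oplus x^{n-1}V_j$ (formal copies of $V_j$) with $s\cdot(x^lv)=\chi^{-l}(s)x^l(s\cdot v)$ for $s\in G$, $z\cdot(x^lv)=x^{l+1}v$ for $0\leq l\leq n-2$, and $z\cdot(x^{n-1}v)=(\lambda_j-1)v$. $(a)$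 denotes the two-sided ideal of $H$ generated by $a$. *)

From HB Require Import structures.
From mathcomp Require Import all_boot all_order all_algebra all_fingroup all_solvable all_field all_character.
Set Implicit Arguments. Unset Strict Implicit. Unset Printing Implicit Defensive.
Import GRing.Theory.
Local Open Scope ring_scope.

(* The group G is the whole carrier [set: gT] of a finite group type gT.
   H is modelled by its PBW basis { s z^a : s in G, 0 <= a < n }:
   an element of H is a function (a, s) |-> coefficient of s z^a. *)

Notation Hel k gT n := {ffun 'I_n * gT -> k}.
Notation Pmod k n j := {ffun 'I_n -> 'cV[k]_(irr_degree j)}.

Section HDefs.
Variables (k : fieldType) (gT : finGroupType) (chi : gT -> k) (g : gT) (n : nat).

Local Notation Hel := {ffun 'I_n * gT -> k}.

(* the basis element s z^m, indexed by a natural number m (used with m < n) *)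
Definition hbasis (m : nat) (s : gT) : Hel :=
  [ffun p : 'I_n * gT => (((p.1 : nat) == m) && (p.2 == s))%:R].

(* product of basis elements (s z^a)(t z^b) in H, computed with the relations
   z t = chi(t) t z and z^n = g^n - 1 *)
Definition bmul (a : nat) (s : gT) (b : nat) (t : gT) : Hel :=
  [ffun r : 'I_n * gT => chi t ^+ a *
    (if (a + b < n)%N then hbasis (a + b)%N (s * t)%g r
     else hbasis (a + b - n)%N (s * t * g ^+ n)%g r - hbasis (a + b - n)%N (s * t)%g r)].

Definition hmul (x y : Hel) : Hel :=
  [ffun r : 'I_n * gT =>
    \sum_(p : 'I_n * gT) \sum_(q : 'I_n * gT) x p * y q * bmul p.1 p.2 q.1 q.2 r].

(* the image in H of the element sum_u f(u) u of kG *)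
Definition gelt (f : gT -> k) : Hel :=
  [ffun p : 'I_n * gT => if (p.1 : nat) == 0%N then f p.2 else 0].

Definition in_ideal (a h : Hel) : Prop :=
  exists (m : nat) (xs ys : 'I_m -> Hel), h = \sum_(i < m) hmul (hmul (xs i) a) (ys i).

Variable sG : irrType k [set: gT].

Definition chr (i : sG) (h : gT) : k := \tr (irr_repr i h).

Definition eidem (i : sG) : Hel :=
  gelt (fun u => (irr_degree i)%:R / (#|[set: gT]|)%:R * chr i (u^-1)%g).

(* i in Lambda_0  <=>  g^n acts on V_i by the scalar 1 *)
Definition Lam0 (i : sG) : bool := irr_repr i (g ^+ n)%g == 1%:M.

(* i in Orb(j)  <=>  chi_i = chi^{-l} chi_j (= chi_{tau^l(j)}) for some 0 <= l < n *)
Definition inOrb (j i : sG) : bool :=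
  [exists l : 'I_n, [forall h : gT, chr i h == (chi h)^-1 ^+ l * chr j h]].

Definition Eidem (j : sG) : Hel :=
  \sum_(i | Lam0 i) eidem i + \sum_(i | ~~ Lam0 i && ~~ inOrb j i) eidem i.

(* P_j = V_j + x V_j + ... + x^{n-1} V_j, V_j = column vectors with the left
   action v |-> irr_repr j s *m v *)
Local Notation Pmod j := {ffun 'I_n -> 'cV[k]_(irr_degree j)}.

Definition Pat (j : sG) (w : Pmod j) (m : nat) : 'cV[k]_(irr_degree j) :=
  if insub m is Some o then w o else 0.

(* z . (x^l v) = x^{l+1} v (l <= n-2),  z . (x^{n-1} v) = (lambda_j - 1) v
   where lambda_j v = g^n . v *)
Definition zact (j : sG) (w : Pmod j) : Pmod j :=
  [ffun l : 'I_n => if (l : nat) == 0%N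
     then irr_repr j (g ^+ n)%g *m Pat w n.-1 - Pat w n.-1
     else Pat w l.-1].

Definition sact (j : sG) (s : gT) (w : Pmod j) : Pmod j :=
  [ffun l : 'I_n => (chi s)^-1 ^+ l *: (irr_repr j s *m w l)].

Definition hact (j : sG) (h : Hel) (w : Pmod j) : Pmod j :=
  \sum_(p : 'I_n * gT) h p *: sact p.2 (iter p.1 (@zact j) w).
End HDefs.

From HB Require Import structures.
From mathcomp Require Import all_boot all_order all_algebra all_fingroup all_solvable.
From mathcomp Require Import all_field all_character.
From mathcomp Require Import ring zify.
Set Implicit Arguments. Unset Strict Implicit. Unset Printing Implicit Defensive.
Import GRing.Theory.
Local Open Scope ring_scope.

(* As a kG-module, P_j is the direct sum of the x^l V_j, and x^l V_j is V_j twisted by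
   the linear character chi^-l, i.e. the simple module V_tau^l(j).  So the central
   idempotent e_i kills P_j exactly when i is not in Orb(j); as no index of Orb(j) lies in
   Lambda_0, the generator E of the ideal kills P_j.  Conversely, write h = sum_a f_a z^a
   with f_a in kG.  Because lambda_j <> 1, z^a acts on the coordinates of P_j as a cyclic
   shift with nonzero weights, so h kills P_j only if every f_a kills every x^l V_j, i.e.
   f_a e_i = 0 for i in Orb(j).  Then f_a = f_a E, and h = sum_a f_a E z^a lies in (E). *)

Section GroupAlgebra.
Variables (k : closedFieldType) (k_char0 : [pchar k] =i pred0).
Variables (gT : finGroupType) (sG : irrType k [set: gT]).

Local Notation G := [set: gT]%G.
Local Notation aG := (regular_repr k G).

Lemma pchar'_setT : (([pchar k]^').-group G)%g.
Proof. by apply/pgroupP => p _ _; rewrite !inE /=; have := k_char0 p; rewrite !inE => ->. Qed.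

Lemma natf_neq0_char0 m : (0 < m)%N -> m%:R != 0 :> k.
Proof. by move/GRing.pcharf0P: k_char0 => ->; rewrite -lt0n. Qed.

Let splitG : group_splitting_field k G := @group_closure_closed_field k gT G.

Let cardG_neq0 : #|G|%:R != 0 :> k := natf_neq0_char0 (cardG_gt0 G).

Lemma mxtrace_regular x : \tr (aG x) = #|G|%:R *+ (x == 1%g).
Proof.
have diag i : regular_mx k G x i i = (x == 1%g)%:R.
  rewrite !mxE eqxx eq_sym -{2}(gring_valK i) (can_in_eq (@gring_indexK _ G)) ?inE //.
  by rewrite -{2}(mulg1 (enum_val i)) (inj_eq (mulgI _)).
rewrite /mxtrace (eq_bigr _ (fun i _ => diag i)) sumr_const card_ord.
by case: (x == 1%g); rewrite ?mulr1n ?mulr0n ?mul0rn.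
Qed.

Lemma mxtrace_group_ring (A : 'M[k]_#|G|) : (A \in group_ring k G)%MS ->
  \tr A = \sum_(i : sG) \tr (gring_op (irr_repr i) A) *+ irr_degree i.
Proof.
case/envelop_mxP => a ->; rewrite raddf_sum /=.
under eq_bigr do rewrite mxtraceZ (mxtrace_regular_pchar sG pchar'_setT splitG) ?inE //.
under [RHS]eq_bigr do rewrite linear_sum raddf_sum /= -sumrMnl.
rewrite exchange_big /=; apply: eq_bigr => x _; rewrite mulr_sumr.
by apply: eq_bigr => i _; rewrite linearZ /= gring_opG ?inE // mxtraceZ mulrnAr.
Qed.

Definition ecoef (i : sG) (x : gT) : k :=
  (irr_degree i)%:R / #|G|%:R * chr i x^-1%g.

(* character.v proves this expansion only over algC. *)
Lemma Wedderburn_id_expansion_pchar (i : sG) :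
  Wedderburn_id i = \sum_(x in G) ecoef i x *: aG x.
Proof.
have Re_i := Wedderburn_id_mem i.
have /envelop_mxP[a def_e] : (Wedderburn_id i \in group_ring k G)%MS.
  by move: Re_i; rewrite genmxE mem_sub_gring => /andP[].
rewrite {1}def_e; apply: eq_bigr => x _; congr (_ *: _).
pose t := \tr (Wedderburn_id i *m aG x^-1%g).
have t_reg : t = a x * #|G|%:R.
  rewrite /t def_e mulmx_suml raddf_sum (bigD1 x) ?inE //= big1 ?addr0.
    by rewrite -scalemxAl mxtraceZ -repr_mxM ?inE // mulgV mxtrace_regular eqxx.
  move=> y /andP[_ nyx]; rewrite -scalemxAl mxtraceZ -repr_mxM ?inE //.
  by rewrite mxtrace_regular -eq_mulgV1 (negbTE nyx) mulr0n mulr0.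
have t_irr : t = chr i x^-1%g *+ irr_degree i.
  rewrite /t mxtrace_group_ring; last first.
    apply: envelop_mxM; last exact: envelop_mx_id.
    by move: Re_i; rewrite genmxE mem_sub_gring => /andP[].
  rewrite (bigD1 i) //= big1 ?addr0.
    by rewrite gring_opM ?envelop_mx_id // op_Wedderburn_id_pchar ?pchar'_setT // mul1mx gring_opG.
  move=> i' ni'i; rewrite gring_opM ?envelop_mx_id //.
  by rewrite (irr_repr'_op0_pchar pchar'_setT _ Re_i) ?mul0mx ?raddf0 ?mul0rn // eq_sym.
apply: (mulIf cardG_neq0); rewrite -t_reg t_irr /ecoef mulrAC divfK //.
by rewrite mulr_natl.
Qed.

Lemma sum_ecoef (u : gT) : \sum_(i : sG) ecoef i u = (u == 1%g)%:R.
Proof.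
have := mxtrace_regular_pchar sG pchar'_setT splitG (in_setT u^-1%g).
rewrite mxtrace_regular invg_eq1 => reg_u.
transitivity (#|G|%:R^-1 * \sum_(i : sG) chr i u^-1%g *+ irr_degree i).
  by rewrite mulr_sumr; apply: eq_bigr => i _; rewrite /ecoef -mulr_natl; ring.
by rewrite /chr -reg_u; case: (u == 1%g); rewrite ?mulr1n ?mulr0n ?mulr0 ?mulVf.
Qed.

End GroupAlgebra.

Section LinearTwist.
Variables (k : closedFieldType) (k_char0 : [pchar k] =i pred0).
Variables (gT : finGroupType) (sG : irrType k [set: gT]) (psi : gT -> k).
Hypotheses (psiM : forall s t, psi (s * t)%g = psi s * psi t)
           (psi_neq0 : forall s, psi s != 0).

Local Notation G := [set: gT]%G.

Definition twist_mx (j : sG) (x : gT) : 'M[k]_(irr_degree j) := psi x *: irr_repr j x.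

Lemma psi1 : psi 1%g = 1.
Proof. by apply: (mulfI (psi_neq0 1%g)); rewrite mulr1 -psiM mulg1. Qed.

Lemma twist_mx_repr j : mx_repr G (twist_mx j).
Proof.
split=> [|x y _ _]; first by rewrite /twist_mx psi1 scale1r repr_mx1.
by rewrite /twist_mx repr_mxM ?inE // psiM -scalemxAl -scalemxAr scalerA.
Qed.

Definition twist_repr j := MxRepresentation (twist_mx_repr j).

Lemma mxmodule_twist j m (U : 'M_(m, irr_degree j)) :
  mxmodule (twist_repr j) U = mxmodule (irr_repr j) U.
Proof.
apply: eq_subset_r => x; rewrite !inE /= /twist_mx -scalemxAr.
by rewrite eqmx_scale.
Qed.

Lemma twist_repr_irr j : mx_irreducible (twist_repr j).
Proof.
have [modV nzV minV] := socle_irr j.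
by split=> [|//|U]; rewrite mxmodule_twist //; apply: minV.
Qed.

Lemma Wedderburn_id_twist_op0 (i j : sG) :
  ~ (forall x, chr i x = psi x * chr j x) ->
  \sum_(x in G) ecoef i x *: twist_mx j x = 0.
Proof.
move=> chr_neq; set i' := irr_comp sG (twist_repr j).
have i'_sim := rsim_irr_comp_pchar sG (pchar'_setT k_char0 gT) (twist_repr_irr j).
have ne_ii' : i != i'.
  apply: contra_notN chr_neq => /eqP-> x.
  by rewrite /chr -(mxtrace_rsim i'_sim) ?inE //= /twist_mx mxtraceZ.
have := irr_comp'_op0_pchar (pchar'_setT k_char0 gT) (twist_repr_irr j) ne_ii'
  (Wedderburn_id_mem i).
rewrite (Wedderburn_id_expansion_pchar k_char0) linear_sum /= => op0; rewrite -[RHS]op0.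
apply: eq_bigr => x _; rewrite [RHS]linearZ; congr (_ *: _).
by symmetry; exact: (gring_opG (twist_repr j) (in_setT x)).
Qed.

End LinearTwist.

Lemma sum_pair (V : nmodType) (I J : finType) (F : I * J -> V) :
  \sum_p F p = \sum_(a : I) \sum_(s : J) F (a, s).
Proof. by rewrite pair_bigA; apply: eq_bigr => -[]. Qed.

Section PBW.
Variables (k : fieldType) (gT : finGroupType) (chi : gT -> k) (g : gT) (n : nat).
Hypothesis n_gt0 : (0 < n)%N.

Local Notation Hl := (Hel k gT n).
Local Notation ord0n := (Ordinal n_gt0).

Lemma bmul0l s (b : 'I_n) t r :
  bmul chi g n 0 s b t r = ((r.1 == b :> nat) && (r.2 == s * t)%g)%:R.
Proof. by rewrite ffunE expr0 mul1r add0n ltn_ord ffunE. Qed.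

Lemma hmul_gelt f (y : Hl) :
  hmul chi g (gelt n f) y = [ffun r => \sum_s f s * y (r.1, (s^-1 * r.2)%g)].
Proof.
apply/ffunP => r; rewrite !ffunE sum_pair (bigD1 ord0n) //= [X in _ + X]big1 ?addr0.
  apply: eq_bigr => s _; rewrite ffunE /=.
  rewrite (bigD1 (r.1, (s^-1 * r.2)%g)) //= [X in _ + X]big1 ?addr0.
    by rewrite bmul0l /= eqxx mulKVg eqxx mulr1.
  move=> [b t] /= ne_q; rewrite bmul0l /=.
  have [eq_b|] := eqP; last by rewrite mulr0.
  have [eq_t|] := eqP; last by rewrite mulr0.
  by case/eqP: ne_q; congr (_, _); [apply: val_inj | rewrite eq_t mulKg].
move=> a /negbTE ne_a0; apply: big1 => s _; apply: big1 => q _.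
by rewrite ffunE /= (ne_a0 : (a == 0 :> nat) = false) !mul0r.
Qed.

Lemma PBW_decomposition (h : Hl) :
  h = \sum_(a < n) hmul chi g (gelt n (fun s => h (a, s))) (hbasis k n a 1%g).
Proof.
apply/ffunP => -[b u]; rewrite sum_ffunE (bigD1 b) //= [X in _ + X]big1 ?addr0.
  rewrite hmul_gelt ffunE (bigD1 u) //= [X in _ + X]big1 ?addr0.
    by rewrite ffunE /= !eqxx mulVg eqxx mulr1.
  move=> s ne_su; rewrite ffunE /= eqxx /=.
  by rewrite -eq_invg_mul invgK (negbTE ne_su) mulr0.
move=> a /negbTE ne_ab; have ne_ba : (b == a :> nat) = false by rewrite eq_sym.
by rewrite hmul_gelt ffunE big1 // => s _; rewrite ffunE /= ne_ba mulr0.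
Qed.

End PBW.

Section ModuleP.
Variables (k : closedFieldType) (k_char0 : [pchar k] =i pred0).
Variables (gT : finGroupType) (sG : irrType k [set: gT]).
Variables (chi : gT -> k) (n : nat) (g : gT) (j : sG).
Hypotheses (chiM : forall s t, chi (s * t)%g = chi s * chi t)
           (chi_n : forall s, chi s ^+ n = 1) (n_gt0 : (0 < n)%N)
           (g_central : (g \in 'Z([set: gT]))%g) (j_Lam1 : ~~ Lam0 g n j).

Local Notation Hl := (Hel k gT n).
Local Notation Pm := (Pmod k n j).
Local Notation Pat := (@Pat k gT n sG j).
Local Notation Z := (@zact k gT g n sG j).
Local Notation S := (@sact k gT chi n sG j).
Local Notation hact := (@hact k gT chi g n sG j).

Lemma chi_neq0 s : chi s != 0.
Proof.
apply/eqP => chi_s0; move: (chi_n s); rewrite chi_s0 expr0n eqn0Ngt n_gt0 /=.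
by move/eqP; rewrite eq_sym oner_eq0.
Qed.

Lemma chiX s m : chi (s ^+ m)%g = chi s ^+ m.
Proof.
elim: m => [|m IHm]; first exact: psi1 chiM chi_neq0.
by rewrite expgS chiM IHm exprS.
Qed.

Lemma chiV_expn_pred s : (chi s)^-1 ^+ n.-1 = chi s.
Proof.
apply: (mulIf (invr_neq0 (chi_neq0 s))).
by rewrite -exprSr prednK // exprVn chi_n invr1 mulfV ?chi_neq0.
Qed.

Definition chiVX l s := (chi s)^-1 ^+ l.

Lemma chiVXM l s t : chiVX l (s * t)%g = chiVX l s * chiVX l t.
Proof. by rewrite /chiVX chiM invfM exprMn. Qed.

Lemma chiVX_neq0 l s : chiVX l s != 0.
Proof. by rewrite expf_neq0 ?invr_neq0 ?chi_neq0. Qed.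

Local Notation twist l := (twist_mx (chiVX l) j).

Definition lamj := irr_mode j (g ^+ n)%g.

Lemma irr_repr_gn : irr_repr j (g ^+ n)%g = lamj%:M.
Proof.
exact: irr_center_scalar (@group_closure_closed_field k gT _) j _ (groupX n g_central).
Qed.

Lemma lamj_neq1 : lamj != 1.
Proof. by apply: contra j_Lam1 => /eqP lamj1; rewrite /Lam0 irr_repr_gn lamj1. Qed.

Lemma Pat_ord (w : Pm) (o : 'I_n) : Pat w o = w o.
Proof. by rewrite /Pat valK. Qed.

Lemma PmodP (w1 w2 : Pm) : (forall m, (m < n)%N -> Pat w1 m = Pat w2 m) -> w1 = w2.
Proof. by move=> eq_w; apply/ffunP => o; rewrite -!Pat_ord eq_w. Qed.

Lemma PatD (w1 w2 : Pm) m : Pat (w1 + w2) m = Pat w1 m + Pat w2 m.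
Proof. by rewrite /Pat; case: insubP => [o _ _|_]; rewrite ?ffunE ?addr0. Qed.

Lemma PatZ c (w : Pm) m : Pat (c *: w) m = c *: Pat w m.
Proof. by rewrite /Pat; case: insubP => [o _ _|_]; rewrite ?ffunE ?scaler0. Qed.

Lemma Pat0 m : Pat 0 m = 0.
Proof. by rewrite /Pat; case: insubP => [o _ _|_]; rewrite ?ffunE. Qed.

Lemma Pat_sum I r (P : pred I) (F : I -> Pm) m :
  Pat (\sum_(i <- r | P i) F i) m = \sum_(i <- r | P i) Pat (F i) m.
Proof. exact: (big_morph (Pat^~ m) (fun w1 w2 => PatD w1 w2 m) (Pat0 m)). Qed.

Lemma Pat_sact s (w : Pm) m :
  Pat (S s w) m = (chi s)^-1 ^+ m *: (irr_repr j s *m Pat w m).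
Proof. by rewrite /Pat; case: insubP => [o _ <-|_]; rewrite ?ffunE ?mulmx0 ?scaler0. Qed.

Lemma Pat_zact (w : Pm) m : (m < n)%N ->
  Pat (Z w) m = if m == 0%N then (lamj - 1) *: Pat w n.-1 else Pat w m.-1.
Proof.
move=> lt_mn; rewrite -[m]/(val (Ordinal lt_mn)) Pat_ord ffunE /=.
by case: ifP => // _; rewrite irr_repr_gn mul_scalar_mx scalerBl scale1r.
Qed.

Lemma sact_is_linear s : linear (S s).
Proof.
move=> c w1 w2; apply/ffunP => l; rewrite !ffunE mulmxDr -scalemxAr.
by rewrite scalerDr !scalerA mulrC.
Qed.

HB.instance Definition _ s := GRing.isLinear.Build k Pm Pm *:%R (S s) (sact_is_linear s).

Lemma zact_is_linear : linear Z.
Proof.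
move=> c w1 w2; apply: PmodP => m lt_mn; rewrite PatD PatZ !Pat_zact //.
by case: ifP => _; rewrite PatD PatZ // scalerDr !scalerA mulrC.
Qed.

HB.instance Definition _ := GRing.isLinear.Build k Pm Pm *:%R Z zact_is_linear.

Definition zpow a (w : Pm) : Pm := iter a Z w.

Lemma zpow_is_linear a : linear (zpow a).
Proof. by move=> c w1 w2; rewrite /zpow; elim: a => //= a ->; rewrite linearP. Qed.

HB.instance Definition _ a := GRing.isLinear.Build k Pm Pm *:%R (zpow a) (zpow_is_linear a).

Definition basis_act (p : 'I_n * gT) (w : Pm) : Pm := S p.2 (zpow p.1 w).

Lemma basis_act_is_linear p : linear (basis_act p).
Proof. by move=> c w1 w2; rewrite /basis_act !linearP. Qed.

HB.instance Definition _ p :=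
  GRing.isLinear.Build k Pm Pm *:%R (basis_act p) (basis_act_is_linear p).

Lemma sactM s t (w : Pm) : S s (S t w) = S (s * t)%g w.
Proof.
apply: PmodP => m _; rewrite !Pat_sact -scalemxAr scalerA mulmxA -repr_mxM ?inE //.
by rewrite chiM invfM exprMn mulrC.
Qed.

Lemma sact_gn s (w : Pm) : S (s * g ^+ n)%g w = lamj *: S s w.
Proof.
apply: PmodP => m _; rewrite PatZ !Pat_sact chiM chiX chi_n mulr1 repr_mxM ?inE //.
by rewrite irr_repr_gn mul_mx_scalar -scalemxAl !scalerA mulrC.
Qed.

Lemma zact_sact t (w : Pm) : Z (S t w) = chi t *: S t (Z w).
Proof.
apply: PmodP => m lt_mn; rewrite PatZ !Pat_sact !Pat_zact //.
have [-> | m_neq0] := eqP.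
  by rewrite Pat_sact expr0 !scale1r chiV_expn_pred -!scalemxAr !scalerA mulrC.
have m_gt0 : (0 < m)%N by rewrite lt0n; apply/eqP.
rewrite Pat_sact scalerA; congr (_ *: _).
by rewrite -{2}(prednK m_gt0) exprS mulrA mulfV ?chi_neq0 ?mul1r.
Qed.

Lemma zpow_sact a t (w : Pm) : zpow a (S t w) = chi t ^+ a *: S t (zpow a w).
Proof.
elim: a => [|a IHa]; first by rewrite scale1r.
by rewrite [LHS]/= -/(zpow a _) IHa linearZ /= zact_sact scalerA exprSr.
Qed.

(* z^a moves coordinate zshift a m of P_j to coordinate m and scales it by zscale a m;
   the factor lamj - 1 appears when the shift wraps around. *)
Definition zshift a m := if (a <= m)%N then (m - a)%N else (m + n - a)%N.
Definition zscale a m := if (a <= m)%N then 1 else lamj - 1.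

Lemma zshift_lt a m : (a <= n)%N -> (m < n)%N -> (zshift a m < n)%N.
Proof. by rewrite /zshift => ? ?; case: (leqP a m); lia. Qed.

Lemma zshift_inj a b m : (a < n)%N -> (b < n)%N -> (m < n)%N ->
  zshift a m = zshift b m -> a = b.
Proof. by rewrite /zshift => ? ? ?; case: (leqP a m); case: (leqP b m); lia. Qed.

Lemma zscale_neq0 a m : zscale a m != 0.
Proof. by rewrite /zscale; case: ifP; rewrite ?oner_neq0 ?subr_eq0 ?lamj_neq1. Qed.

Lemma Pat_zpow a (w : Pm) m : (a <= n)%N -> (m < n)%N ->
  Pat (zpow a w) m = zscale a m *: Pat w (zshift a m).
Proof.
rewrite /zscale /zshift; elim: a m => [|a IHa] m lt_an lt_mn.
  by rewrite subn0 scale1r.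
have IH m' := IHa m' (ltnW lt_an).
rewrite [zpow _ _]/= Pat_zact //; have [-> | m_neq0] := eqP.
  have le_a_n1 : (a <= n.-1)%N by lia.
  by rewrite IH ?ltn_predL // ltn0 le_a_n1 scale1r; congr (_ *: Pat w _); lia.
have m_gt0 : (0 < m)%N by rewrite lt0n; apply/eqP.
rewrite IH; last by lia.
have -> : (a <= m.-1)%N = (a < m)%N by rewrite -[in RHS](prednK m_gt0).
by case: ltnP => _; congr (_ *: Pat w _); lia.
Qed.

Lemma zpow_n (w : Pm) : zpow n w = (lamj - 1) *: w.
Proof.
apply: PmodP => m lt_mn; rewrite Pat_zpow // PatZ /zscale /zshift leqNgt lt_mn.
by rewrite addnK.
Qed.

Lemma Pat_basis_act p (w : Pm) (l : 'I_n) :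
  Pat (basis_act p w) l = zscale p.1 l *: (twist l p.2 *m Pat w (zshift p.1 l)).
Proof.
rewrite Pat_sact (Pat_zpow _ (ltnW (ltn_ord p.1)) (ltn_ord l)) /twist_mx.
by rewrite -scalemxAl -!scalemxAr !scalerA mulrC.
Qed.

Lemma hactE (h : Hl) (w : Pm) : hact h w = \sum_p h p *: basis_act p w.
Proof. by []. Qed.

Lemma hactDl (h1 h2 : Hl) (w : Pm) : hact (h1 + h2) w = hact h1 w + hact h2 w.
Proof. by rewrite !hactE -big_split; apply: eq_bigr => p _; rewrite ffunE scalerDl. Qed.

Lemma hactBl (h1 h2 : Hl) (w : Pm) : hact (h1 - h2) w = hact h1 w - hact h2 w.
Proof.
rewrite !hactE -sumrB; apply: eq_bigr => p _.
by rewrite !ffunE scalerDl scaleNr.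
Qed.

Lemma hactZl c (h : Hl) (w : Pm) : hact [ffun r => c * h r] w = c *: hact h w.
Proof. by rewrite !hactE scaler_sumr; apply: eq_bigr => p _; rewrite ffunE scalerA. Qed.

Lemma hact_suml I r (P : pred I) (F : I -> Hl) (w : Pm) :
  hact (\sum_(i <- r | P i) F i) w = \sum_(i <- r | P i) hact (F i) w.
Proof.
apply: (big_morph (hact^~ w) (fun h1 h2 => hactDl h1 h2 w)).
by rewrite hactE big1 // => p _; rewrite ffunE scale0r.
Qed.

Lemma hact0r (h : Hl) : hact h 0 = 0.
Proof. by rewrite hactE big1 // => p _; rewrite linear0 scaler0. Qed.

Lemma hact_hbasis m u (w : Pm) (lt_mn : (m < n)%N) :
  hact (hbasis k n m u) w = basis_act (Ordinal lt_mn, u) w.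
Proof.
rewrite hactE (bigD1 (Ordinal lt_mn, u)) //= big1 ?addr0.
  by rewrite ffunE /= !eqxx scale1r.
move=> [a s] /= ne_p; rewrite ffunE /=.
have [eq_a|] := eqP; last by rewrite scale0r.
have [eq_s|] := eqP; last by rewrite scale0r.
by case/eqP: ne_p; congr (_, _) => //; apply: val_inj.
Qed.

Lemma hact_bmul (a b : 'I_n) s t (w : Pm) :
  hact (bmul chi g n a s b t) w = basis_act (a, s) (basis_act (b, t) w).
Proof.
have -> : bmul chi g n a s b t = [ffun r => chi t ^+ a * (if (a + b < n)%N
      then hbasis k n (a + b) (s * t)%g
      else hbasis k n (a + b - n) (s * t * g ^+ n)%g - hbasis k n (a + b - n) (s * t)%g) r].
  by apply/ffunP => r; rewrite !ffunE; case: ifP; rewrite ?ffunE.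
rewrite hactZl /basis_act /= zpow_sact linearZ /= sactM /zpow -iterD; congr (_ *: _).
case: ifP => [lt_abn | /negbT]; first by rewrite hact_hbasis.
rewrite -leqNgt => le_nab; have lt_abn : (a + b - n < n)%N by move: (ltn_ord a) (ltn_ord b); lia.
rewrite hactBl !(hact_hbasis _ _ lt_abn) /basis_act /= sact_gn.
rewrite -[in RHS](subnK le_nab) iterD -/(zpow n _) zpow_n -/(zpow (a + b - n) _).
by rewrite !linearZ /= scalerBl scale1r.
Qed.

Lemma hact_hmul (x y : Hl) (w : Pm) : hact (hmul chi g x y) w = hact x (hact y w).
Proof.
transitivity (\sum_p \sum_q (x p * y q) *: hact (bmul chi g n p.1 p.2 q.1 q.2) w).
  rewrite hactE; under eq_bigr do rewrite ffunE scaler_suml.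
  rewrite exchange_big; apply: eq_bigr => p _.
  under eq_bigr do rewrite scaler_suml.
  rewrite exchange_big; apply: eq_bigr => q _.
  by rewrite hactE scaler_sumr; apply: eq_bigr => r _; rewrite scalerA.
rewrite [RHS]hactE; apply: eq_bigr => -[a s] _.
rewrite hactE linear_sum scaler_sumr; apply: eq_bigr => -[b t] _.
by rewrite hact_bmul linearZ scalerA.
Qed.

Lemma hact_gelt f (w : Pm) : hact (gelt n f) w = \sum_s f s *: S s w.
Proof.
rewrite hactE sum_pair (bigD1 (Ordinal n_gt0)) //= [X in _ + X]big1 ?addr0.
  by apply: eq_bigr => s _; rewrite ffunE.
move=> a /negbTE ne_a0; apply: big1 => s _.
by rewrite ffunE /= (ne_a0 : (a == 0 :> nat) = false) scale0r.
Qed.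

Lemma Pat_hact_gelt f (w : Pm) m :
  Pat (hact (gelt n f) w) m = (\sum_s f s *: twist m s) *m Pat w m.
Proof.
rewrite hact_gelt Pat_sum mulmx_suml; apply: eq_bigr => s _.
by rewrite PatZ Pat_sact /twist_mx -!scalemxAl.
Qed.

Lemma inOrb_Lam1 i : inOrb chi n j i -> ~~ Lam0 g n i.
Proof.
case/existsP => l /forallP chr_i; apply: contra j_Lam1 => /eqP irr_i_gn.
have := eqP (chr_i 1%g); rewrite /chr !repr_mx1 (psi1 chiM chi_neq0) invr1 expr1n mul1r.
have := eqP (chr_i (g ^+ n)%g).
rewrite /chr irr_i_gn irr_repr_gn chiX chi_n invr1 expr1n mul1r !mxtrace1 mxtrace_scalar.
move=> deg_lamj deg_ij; have deg_i_neq0 := natf_neq0_char0 k_char0 (irr_degree_gt0 i).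
have lamj1 : lamj = 1.
  by apply: (mulIf deg_i_neq0); rewrite mul1r {1}deg_ij mulr_natr -deg_lamj.
by rewrite /Lam0 irr_repr_gn lamj1.
Qed.

Lemma hact_eidem i (w : Pm) : ~~ inOrb chi n j i -> hact (eidem n i) w = 0.
Proof.
move=> not_orb; apply: PmodP => m lt_mn; rewrite Pat_hact_gelt Pat0.
suff -> : \sum_s ecoef i s *: twist m s = 0 by rewrite mul0mx.
have chr_neq : ~ (forall x, chr i x = chiVX m x * chr j x).
  move=> chr_i; case/negP: not_orb; apply/existsP; exists (Ordinal lt_mn).
  by apply/forallP => x; rewrite chr_i.
have := Wedderburn_id_twist_op0 k_char0 (chiVXM m) (@chiVX_neq0 m) chr_neq.
by move=> twist0; rewrite -[RHS]twist0; apply: eq_bigl => x; rewrite inE.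
Qed.

Lemma hact_Eidem (w : Pm) : hact (Eidem chi g n j) w = 0.
Proof.
rewrite /Eidem hactDl !hact_suml !big1 ?addr0 // => i.
  by case/andP => _; apply: hact_eidem.
by move=> Lam0_i; apply: hact_eidem; apply: contraL Lam0_i; apply: inOrb_Lam1.
Qed.

Lemma in_ideal_annihilates (h : Hl) :
  in_ideal chi g (Eidem chi g n j) h -> forall w, hact h w = 0.
Proof.
case=> m [xs [ys ->]] w; rewrite hact_suml big1 // => i _.
by rewrite !hact_hmul hact_Eidem hact0r.
Qed.

Definition Ecoef u := \sum_(i | ~~ inOrb chi n j i) ecoef i u.

Lemma Eidem_gelt : Eidem chi g n j = gelt n Ecoef.
Proof.
apply/ffunP => r; rewrite !ffunE !sum_ffunE; case: eqP => [r1_0 | /eqP/negbTE r1_neq0].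
  rewrite /Ecoef [RHS](bigID (fun i => Lam0 g n i)) /=; congr (_ + _).
    apply: eq_big => i; last by rewrite ffunE r1_0 eqxx.
    by apply/idP/andP => [Lam0_i | []//]; split=> //; exact: contraL (@inOrb_Lam1 i) Lam0_i.
  by apply: eq_big => [i | i _]; rewrite 1?andbC // ffunE r1_0 eqxx.
by rewrite !big1 ?addr0 // => i _; rewrite ffunE r1_neq0.
Qed.

Lemma conv_Ecoef_id f : (forall l : 'I_n, \sum_s f s *: twist l s = 0) ->
  forall u, \sum_s f s * Ecoef (s^-1 * u)%g = f u.
Proof.
move=> f_twist0 u.
(* 1 - Ecoef is the sum of the ecoef i over Orb(j), and convolving f with such an
   ecoef i gives a trace of a multiple of sum_s f s *: twist l s = 0. *)
have Ecoef_compl x : Ecoef x = (x == 1%g)%:R - \sum_(i | inOrb chi n j i) ecoef i x.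
  by rewrite -(sum_ecoef k_char0 sG) (bigID (inOrb chi n j)) /= addrC addrK.
under eq_bigr do rewrite Ecoef_compl mulrBr.
rewrite sumrB; have -> : \sum_s f s * ((s^-1 * u)%g == 1%g)%:R = f u.
  rewrite (bigD1 u) //= mulVg eqxx mulr1 big1 ?addr0 // => s ne_su.
  by rewrite -eq_invg_mul invgK (negbTE ne_su) mulr0.
rewrite [X in _ - X](_ : _ = 0) ?subr0 //.
under eq_bigr do rewrite mulr_sumr.
rewrite exchange_big /= big1 // => i /existsP[l /forallP chr_i].
transitivity ((irr_degree i)%:R / #|[set: gT]|%:R *
    \tr (twist l u^-1%g *m \sum_s f s *: twist l s)); last first.
  by rewrite f_twist0 mulmx0 mxtrace0 mulr0.
rewrite mulmx_sumr raddf_sum mulr_sumr; apply: eq_bigr => s _.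
rewrite /= -scalemxAr mxtraceZ -(twist_mx_repr (chiVXM l) (@chiVX_neq0 l) j).2 ?inE //.
rewrite /ecoef invMg invgK /twist_mx mxtraceZ -/(chr j _).
by rewrite -(eqP (chr_i (u^-1 * s)%g)) mulrCA.
Qed.



Lemma annihilator_twist_op0 (h : Hl) : (forall w, hact h w = 0) ->
  forall a l : 'I_n, \sum_s h (a, s) *: twist l s = 0.
Proof.
move=> h_ann a l; set T := \sum_s _.
suff T_v (v : 'cV_(irr_degree j)) : T *m v = 0.
  apply/matrixP => r c; have := T_v (delta_mx c 0).
  by rewrite -colE => /matrixP/(_ r 0); rewrite !mxE.
(* The only coordinate of w is the one that z^a moves to coordinate l. *)
pose w : Pm := [ffun b : 'I_n => if (b : nat) == zshift a l then v else 0].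
have Pat_w (b : 'I_n) : Pat w (zshift b l) = if b == a then v else 0.
  have lt_bl := zshift_lt (ltnW (ltn_ord b)) (ltn_ord l).
  rewrite -[zshift b l]/(val (Ordinal lt_bl)) Pat_ord ffunE /=.
  have [-> | ne_ba] := eqVneq b a; first by rewrite eqxx.
  by case: eqP => // /zshift_inj eq_ba; case/eqP: ne_ba; apply: val_inj; apply: eq_ba.
have := congr1 (Pat^~ l) (h_ann w); rewrite /= Pat0 hactE Pat_sum sum_pair.
rewrite (bigD1 a) //= [X in _ + X]big1 ?addr0 => [hact_a | b ne_ba]; last first.
  by apply: big1 => s _; rewrite PatZ Pat_basis_act Pat_w (negbTE ne_ba) mulmx0 !scaler0.
apply: (scalerI (zscale_neq0 a l)); rewrite scaler0 -{}hact_a mulmx_suml scaler_sumr.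
apply: eq_bigr => s _.
by rewrite PatZ Pat_basis_act Pat_w eqxx -scalemxAl !scalerA mulrC.
Qed.

Lemma annihilator_in_ideal (h : Hl) :
  (forall w, hact h w = 0) -> in_ideal chi g (Eidem chi g n j) h.
Proof.
move=> h_ann; pose f a s := h (a, s).
exists n, (fun a => gelt n (f a)), (fun a => hbasis k n a 1%g).
have fE a : hmul chi g (gelt n (f a)) (Eidem chi g n j) = gelt n (f a).
  rewrite Eidem_gelt hmul_gelt //; apply/ffunP => r; rewrite !ffunE.
  under eq_bigr do rewrite ffunE /=.
  case: eqP => _; first exact: conv_Ecoef_id (annihilator_twist_op0 h_ann a) r.2.
  by rewrite big1 // => s _; rewrite mulr0.
under eq_bigr do rewrite fE.
exact: PBW_decomposition.
Qed.

End ModuleP.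

Theorem theorem4p4
  (k : closedFieldType) (hk : [pchar k] =i pred0)
  (gT : finGroupType) (sG : irrType k [set: gT])
  (chi : gT -> k)
  (chi_morph : forall s t : gT, chi (s * t)%g = chi s * chi t)
  (n : nat) (chi_n : forall s : gT, chi s ^+ n = 1)
  (g : gT) (g_central : (g \in 'Z([set: gT]))%g)
  (g_n : (g ^+ n)%g != 1%g)
  (n_ge2 : (2 <= n)%N) (n_order : n.-primitive_root (chi g)) :
  forall j : sG, ~~ Lam0 g n j ->
  forall h : Hel k gT n,
    (forall w : Pmod k n j, hact chi g h w = 0) <->
    in_ideal chi g (Eidem chi g n j) h.
Proof.
move=> j j_Lam1 h; have n_gt0 : (0 < n)%N by apply: leq_trans n_ge2.
split; first exact: (annihilator_in_ideal hk chi_morph chi_n n_gt0 g_central j_Lam1).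
exact: (in_ideal_annihilates hk chi_morph chi_n n_gt0 g_central j_Lam1).
Qed.
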